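(* Let $\lambda/\mu$ be an r-shape and $\mathbf a,\mathbf b$ column flags for it, with conjugate flags $\mathbf a',\mathbf b'$. Then $$\mathsf S^{\mathbf a,\mathbf b}_{\lambda/\mu}(\mathbf y/\mathbf z)=\overline{\mathsf S}^{\mathbf a',\mathbf b'}_{\lambda'/\mu'}(\overline{\mathbf z}/\overline{\mathbf y}),$$ where $\lambda'/\mu'$ is the conjugate r-shape and $\overline{\mathbf y}=(-y_i)_{i\in\mathbb Z}$, $\overline{\mathbf z}=(-z_i)_{i\in\mathbb Z}$.
   Context: Young diagrams in English notation; $\lambda'$ conjugate partition. An r-shape is $(\lambda/\mu,r)$ with shifted contents $c(i,j)=j-i+r-1+\lambda'_1$. The conjugate r-shape of $(\lambda/\mu,r)$ is the transposed diagram $\lambda'/\mu'$ with root content $-r'$, where $r'$ is the content of the top-right cell of $\lambda/\mu$ (so each cell's content is negated under transposition). Column flags for $\lambda/\mu$: for $n\ge\lambda_1$, $\mathbf a,\mathbf b\in\mathbb Z^n$ with $a_i-a_{i+1}\le\mu'_i-\mu'_{i+1}+1$, $b_i-b_{i+1}\le\lambda'_i-\lambda'_{i+1}+1$ whenever $\mu'_i<\lambda'_{i+1}$. Conjugate flags: $a'_i=a_i+c(\gamma_i)$, $b'_i=b_i+c(\delta_i)$, $\gamma_i,\delta_i$ top and bottom cells of column $i$ of $\lambda/\mu$; these are row flags for $\lambda'/\mu'$. Row flags for an r-shape $\kappa/\nu$: vectors $\mathbf a',\mathbf b'$ with $a'_i\le a'_{i+1}$, $b'_i\le b'_{i+1}$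 whenever $\nu_i<\kappa_{i+1}$. $\mathbf y_{a,b}=(y_a,\ldots,y_b)$ (empty if $a>b$). $e_n(\mathbf x/\mathbf w)=\sum_{i=0}^n(-1)^{n-i}e_i(\mathbf x)h_{n-i}(\mathbf w)$, $h_n(\mathbf x/\mathbf w)=\sum_{i=0}^n(-1)^{n-i}h_i(\mathbf x)e_{n-i}(\mathbf w)$ ($e_0=h_0=1$, zero for negative index). Column flagged function: $\mathsf S^{\mathbf a,\mathbf b}_{\lambda/\mu}(\mathbf y/\mathbf z)=\det[e_{\lambda'_i-i-\mu'_j+j}(\mathbf y_{a_j,b_i}/\mathbf z_{a'_j,b'_i})]_{1\le i,j\le n}$. Row flagged function for an r-shape $\kappa/\nu$ with row flags $\mathbf a',\mathbf b'$: $\overline{\mathsf S}^{\mathbf a',\mathbf b'}_{\kappa/\nu}(\mathbf y/\mathbf z)=\det[h_{\kappa_i-\nu_j-i+j}(\mathbf y_{a'_j,b'_i}/\mathbf z_{a_j,b_i})]_{1\le i,j\le n}$ for $n\ge\ell(\kappa)$, where $a_j=a'_j+c(\zeta_j)$, $b_i=b'_i+c(\xi_i)$ with $\zeta_j,\xi_i$ the leftmost cell of row $j$ and rightmost cell of row $i$ of $\kappa/\nu$ (i.e. $\mathbf a,\mathbf b$ are the column flags of the conjugate shape whose conjugates are $\mathbf a',\mathbf b'$). *)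

From HB Require Import structures.
From mathcomp Require Import all_boot all_order all_algebra.
Set Implicit Arguments. Unset Strict Implicit. Unset Printing Implicit Defensive.
Import Order.TTheory GRing.Theory Num.Theory.

Definition is_partition (l : seq nat) : bool :=
  sorted geq l && all (fun x => 0 < x)%N l.

(* part l i = l_i for i >= 1 (0 beyond the length); part l 0 = 0 (unused). *)
Definition part (l : seq nat) (i : nat) : nat :=
  if i is i'.+1 then nth 0%N l i' else 0%N.

Definition conj_part (l : seq nat) : seq nat :=
  [seq count (fun x => j < x)%N l | j <- iota 0 (head 0%N l)].

Definition subpart (mu lam : seq nat) : Prop :=
  forall i, (part mu i <= part lam i)%N.

Local Open Scope ring_scope.

(* Shifted content of cell (i,j) (row i, column j) of the r-shape (lam/mu, r):
   c(i,j) = j - i + r - 1 + lam'_1. *)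
Definition content (lam : seq nat) (r : int) (i j : nat) : int :=
  j%:Z - i%:Z + r - 1 + (part (conj_part lam) 1)%:Z.

(* Root content -r' of the conjugate r-shape, r' = content of the top-right
   cell (1, lam_1). *)
Definition conj_root (lam : seq nat) (r : int) : int :=
  - content lam r 1 (part lam 1).

Definition is_col_flags (lam mu : seq nat) (n : nat) (a b : nat -> int) : Prop :=
  (part lam 1 <= n)%N /\
  forall i : nat, (1 <= i)%N -> (i < n)%N ->
    (part (conj_part mu) i < part (conj_part lam) i.+1)%N ->
    a i - a i.+1 <= (part (conj_part mu) i)%:Z - (part (conj_part mu) i.+1)%:Z + 1
    /\ b i - b i.+1 <= (part (conj_part lam) i)%:Z - (part (conj_part lam) i.+1)%:Z + 1.

(* Conjugate flags: a'_i = a_i + c(gamma_i), b'_i = b_i + c(delta_i), with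
   gamma_i = (mu'_i + 1, i) the top cell and delta_i = (lam'_i, i) the bottom
   cell of column i of lam/mu. *)
Definition conj_flag_a (lam mu : seq nat) (r : int) (a : nat -> int) (i : nat) : int :=
  a i + content lam r (part (conj_part mu) i).+1 i.
Definition conj_flag_b (lam mu : seq nat) (r : int) (b : nat -> int) (i : nat) : int :=
  b i + content lam r (part (conj_part lam) i) i.

(* For an r-shape (kap/nu, s) with row flags a', b':
   a_j = a'_j + c(zeta_j), b_i = b'_i + c(xi_i), zeta_j = (j, nu_j + 1) the
   leftmost and xi_i = (i, kap_i) the rightmost cell of row j (resp. i). *)
Definition row_flag_a (kap nu : seq nat) (s : int) (a' : nat -> int) (j : nat) : int :=
  a' j + content kap s j (part nu j).+1.
Definition row_flag_b (kap nu : seq nat) (s : int) (b' : nat -> int) (i : nat) : int :=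
  b' i + content kap s i (part kap i).

Section Sym.
Variable R : comNzRingType.

Definition seg (y : int -> R) (a b : int) : seq R :=
  if a <= b then [seq y (a + k%:Z) | k <- iota 0 (absz (b - a + 1))] else [::].

Definition elem (k : nat) (s : seq R) : R :=
  \sum_(A : {set 'I_(size s)} | #|A| == k) \prod_(i in A) s`_i.

Definition compl (k : nat) (s : seq R) : R :=
  \sum_(f : {ffun 'I_(size s) -> 'I_k.+1} | ((\sum_(i < size s) (f i : nat))%N == k))
     \prod_(i < size s) s`_i ^+ f i.

Definition esup (k : int) (x w : seq R) : R :=
  match k with
  | Posz m => \sum_(i < m.+1) (-1) ^+ (m - i) * elem i x * compl (m - i) w
  | Negz _ => 0
  end.

Definition hsup (k : int) (x w : seq R) : R :=
  match k with
  | Posz m => \sum_(i < m.+1) (-1) ^+ (m - i) * compl i x * elem (m - i) w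
  | Negz _ => 0
  end.

Definition col_flagged (lam mu : seq nat) (r : int) (n : nat)
    (a b : nat -> int) (y z : int -> R) : R :=
  let a' := conj_flag_a lam mu r a in
  let b' := conj_flag_b lam mu r b in
  \det (\matrix_(i < n, j < n)
     esup ((part (conj_part lam) i.+1)%:Z - (i.+1)%:Z
             - (part (conj_part mu) j.+1)%:Z + (j.+1)%:Z)
          (seg y (a j.+1) (b i.+1)) (seg z (a' j.+1) (b' i.+1))).

Definition row_flagged (kap nu : seq nat) (s : int) (n : nat)
    (a' b' : nat -> int) (y z : int -> R) : R :=
  let a := row_flag_a kap nu s a' in
  let b := row_flag_b kap nu s b' in
  \det (\matrix_(i < n, j < n)
     hsup ((part kap i.+1)%:Z - (part nu j.+1)%:Z - (i.+1)%:Z + (j.+1)%:Z)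
          (seg y (a' j.+1) (b' i.+1)) (seg z (a j.+1) (b i.+1))).

End Sym.

(* Transposing a cell negates its content, so the conjugate flags of the
   conjugate r-shape are the original flags again and the shifted variable
   sets agree entry by entry.  The index of the (i,j) entry is
   lam'_i - mu'_j - i + j in both determinants, so the theorem reduces to the
   duality e_k(x/w) = h_k(-w/-x) applied to every matrix entry. *)

From HB Require Import structures.
From mathcomp Require Import all_boot all_order all_algebra zify.
Import Order.TTheory GRing.Theory Num.Theory.
Local Open Scope ring_scope.

Lemma part1_conj_part (l : seq nat) :
  all (fun x => 0 < x)%N l -> part (conj_part l) 1 = size l.
Proof.
case: l => [|x l] //= /andP [x_gt0]; rewrite all_count => /eqP l_gt0.
by rewrite /conj_part; case: x x_gt0 => //= x _; rewrite add1n l_gt0.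
Qed.

Lemma conj_part_gt0 (l : seq nat) : all (fun x => 0 < x)%N (conj_part l).
Proof.
apply/allP => c /mapP [j]; rewrite mem_iota add0n => /andP [_ j_lt] ->.
by rewrite -has_count; case: l j_lt => //= x l ->.
Qed.

Lemma part1_conj_partK (l : seq nat) :
  part (conj_part (conj_part l)) 1 = part l 1.
Proof.
by rewrite part1_conj_part ?conj_part_gt0 // size_map size_iota; case: l.
Qed.

Lemma content_conj (lam : seq nat) (r : int) (i j : nat) :
  content (conj_part lam) (conj_root lam r) j i = - content lam r i j.
Proof.
by rewrite /conj_root /content part1_conj_partK; lia.
Qed.

Lemma row_flag_a_conj (lam mu : seq nat) (r : int) (a : nat -> int) (j : nat) :
  row_flag_a (conj_part lam) (conj_part mu) (conj_root lam r)
    (conj_flag_a lam mu r a) j = a j.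
Proof. by rewrite /row_flag_a /conj_flag_a content_conj addrK. Qed.

Lemma row_flag_b_conj (lam mu : seq nat) (r : int) (b : nat -> int) (i : nat) :
  row_flag_b (conj_part lam) (conj_part mu) (conj_root lam r)
    (conj_flag_b lam mu r b) i = b i.
Proof. by rewrite /row_flag_b /conj_flag_b content_conj addrK. Qed.

Section Duality.
Variable R : comNzRingType.

Lemma seg_comp (f : R -> R) (y : int -> R) (a b : int) :
  seg (f \o y) a b = map f (seg y a b).
Proof. by rewrite /seg; case: ifP => // _; rewrite -map_comp. Qed.

Lemma elem_scale (c : R) (k : nat) (s : seq R) :
  elem k [seq c * x | x <- s] = c ^+ k * elem k s.
Proof.
rewrite /elem size_map mulr_sumr; apply: eq_bigr => A /eqP <-.
by rewrite -prodrMl; apply: eq_bigr => i _; rewrite (nth_map 0).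
Qed.

Lemma compl_scale (c : R) (k : nat) (s : seq R) :
  compl k [seq c * x | x <- s] = c ^+ k * compl k s.
Proof.
rewrite /compl size_map mulr_sumr; apply: eq_bigr => f /eqP sum_f.
rewrite -[X in c ^+ X]sum_f -prodrXr -big_split; apply: eq_bigr => i _.
by rewrite (nth_map 0) // exprMn.
Qed.

Lemma esup_hsupN (k : int) (x w : seq R) :
  esup k x w = hsup k (map -%R w) (map -%R x).
Proof.
have oppE (s : seq R) : map -%R s = [seq -1 * t | t <- s].
  by apply: eq_map => t; rewrite mulN1r.
case: k => [m|m] //=; rewrite (reindex_inj rev_ord_inj) /=.
apply: eq_bigr => i _.
rewrite !oppE compl_scale elem_scale subSS (subKn (leq_ord i)).
by rewrite [RHS]mulrACA -expr2 sqrr_sign mul1r mulrAC.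
Qed.
End Duality.

Theorem proposition3p3 (R : comNzRingType) (lam mu : seq nat) (r : int) (n : nat)
    (a b : nat -> int) (y z : int -> R) :
  is_partition lam -> is_partition mu -> subpart mu lam ->
  is_col_flags lam mu n a b ->
  col_flagged lam mu r n a b y z =
  row_flagged (conj_part lam) (conj_part mu) (conj_root lam r) n
    (conj_flag_a lam mu r a) (conj_flag_b lam mu r b)
    (fun i => - z i) (fun i => - y i).
Proof.
(* The identity holds entrywise for arbitrary lists and flag vectors. *)
move=> _ _ _ _; rewrite /col_flagged /row_flagged; congr (\det _).
apply/matrixP => i j; rewrite !mxE row_flag_a_conj row_flag_b_conj.
rewrite -!/(-%R \o _) !seg_comp esup_hsupN.
by congr hsup; lia.
Qed.
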